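(* Let $(E,\{l_k\}_{k\in\mathbb N})$ be a Lie $\infty$-algebra. Then (i) the centroid of $E$ is closed under composition, contains $\mathrm{Id}_E$, and is contained in the set of strict non-abelian embedding tensors of the adjoint representation of $E$ (so it is a unital subalgebra, under composition, of the strict embedding algebra); (ii) every surjective strict non-abelian embedding tensor of the adjoint representation belongs to the centroid; (iii) the invertible elements of the centroid (those with a two-sided inverse in the centroid) are exactly the invertible elements of the strict embedding algebra (the strict non-abelian embedding tensors $T$ that are bijective with $T^{-1}$ also a strict non-abelian embedding tensor).
   Context: Lie $\infty$-algebras are in the shifted convention: a graded vector space $E$ over $\mathbb R$ or $\mathbb C$ with degree $+1$ graded-symmetric brackets $l_k:S^k(E)\to E$ forming a codifferential of the coshuffle coalgebra $\bar S(E)$. A strict non-abelian embedding tensor of the adjoint representation of $E$ is a degree $0$ linear map $T:E\to E$ such that $l_1\circ T=T\circ l_1$ and $l_n(T(x_1),\dots,T(x_n))=T\big(l_n(T(x_1),\dots,T(x_{n-1}),x_n)\big)$ for all $n\ge2$ and $x_1,\dots,x_n\in E$; the set of these maps, with composition, is called the strict embedding algebra. The centroid of $E$ is the set of degree $0$ linear maps $F:E\to E$ with $l_1\circ F=F\circ l_1$ and $\mathrm{ad}_x\circ F=F\circ\mathrm{ad}_x$ for all $x\in\bar S(E)$, where for $x=x_1\cdots x_k\in S^k(E)$, $\mathrm{ad}_x(y)=l_{k+1}(x_1,\dots,x_k,y)$. *)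

From HB Require Import structures.
From mathcomp Require Import all_boot all_order all_algebra all_fingroup.
Set Implicit Arguments. Unset Strict Implicit. Unset Printing Implicit Defensive.
Import Order.TTheory GRing.Theory Num.Theory.
Local Open Scope ring_scope.

(* A Z-graded vector space E = (+)_{i in Z} E_i over K is represented by its
   total space V together with the family of homogeneous subspaces E i,
   such that V is their (internal) direct sum. *)
Record graded_space (K : fieldType) (V : lmodType K) (E : int -> {pred V}) : Prop := {
  gs_sub0 : forall i, 0 \in E i;
  gs_subL : forall i (a : K) (u v : V), u \in E i -> v \in E i -> a *: u + v \in E i;
  gs_span : forall v : V, exists (s : seq int) (x : int -> V),
      (forall i, x i \in E i) /\ v = \sum_(i <- s) x i;
  gs_direct : forall (s : seq int) (x : int -> V), uniq s ->
      (forall i, x i \in E i) -> \sum_(i <- s) x i = 0 ->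
      forall i, i \in s -> x i = 0
}.

(* Brackets: [br n] is l_n : V^n -> V (only n >= 1 is meaningful; [br 0] is unused). *)
Definition brackets (V : Type) := forall n : nat, ('I_n -> V) -> V.

Definition upd (V : Type) n (x : 'I_n -> V) (j : 'I_n) (v : V) : 'I_n -> V :=
  fun k => if k == j then v else x k.

(* Koszul sign of a permutation s acting on homogeneous elements of degrees d:
   x_{s 0} ... x_{s (n-1)} = koszul s d * x_0 ... x_{n-1} in the graded
   symmetric algebra; product over inversions of (-1)^(|x_{s a}| |x_{s b}|). *)
Definition koszul (K : fieldType) n (s : 'S_n) (d : 'I_n -> int) : K :=
  \prod_(a : 'I_n) \prod_(b : 'I_n | (a < b)%N && (s b < s a)%N)
     ((-1) ^ (d (s a) * d (s b))).

Definition unshuffle n (i : nat) (s : 'S_n) : bool :=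
  [forall a : 'I_n, forall b : 'I_n,
     ((a < b)%N && ((b < i)%N || (i <= a)%N)) ==> (s a < s b)%N].

(* The term l_{n-i+1}( l_i(y_0,..,y_{i-1}), y_i, ..., y_{n-1} ), n = m+1. *)
Definition jac_term (V : Type) (l : brackets V) m (i : nat) (y : 'I_m.+1 -> V) : V :=
  l (m.+1 - i).+1
    (fun b : 'I_(m.+1 - i).+1 =>
       if val b == 0%N then l i (fun a : 'I_i => y (inord a))
       else y (inord (i + b - 1))).

(* Lie infinity algebra in the shifted convention: degree +1 graded symmetric
   multilinear brackets l_n (n >= 1) satisfying the higher Jacobi identities
   (equivalently, the coderivation they define on the reduced symmetric
   coalgebra squares to zero). *)
Record lie_infty (K : fieldType) (V : lmodType K) (E : int -> {pred V})
    (l : brackets V) : Prop := {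
  li_graded : graded_space E;
  li_multilinear : forall n (x : 'I_n -> V) (j : 'I_n) (a : K) (u v : V),
      l n (upd x j (a *: u + v)) = a *: l n (upd x j u) + l n (upd x j v);
  li_degree : forall n (x : 'I_n -> V) (d : 'I_n -> int), (0 < n)%N ->
      (forall j, x j \in E (d j)) -> l n x \in E (\sum_j d j + 1);
  li_symmetric : forall n (x : 'I_n -> V) (d : 'I_n -> int) (s : 'S_n),
      (forall j, x j \in E (d j)) ->
      l n (fun j => x (s j)) = koszul K s d *: l n x;
  li_jacobi : forall m (x : 'I_m.+1 -> V) (d : 'I_m.+1 -> int),
      (forall j, x j \in E (d j)) ->
      \sum_(1 <= i < m.+2) \sum_(s : 'S_m.+1 | unshuffle i s)
         koszul K s d *: jac_term l i (fun j => x (s j)) = 0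
}.

Definition deg0_linear (K : fieldType) (V : lmodType K) (E : int -> {pred V})
    (F : V -> V) : Prop :=
  (forall (a : K) (u v : V), F (a *: u + v) = a *: F u + F v) /\
  (forall i x, x \in E i -> F x \in E i).

(* Centroid: degree 0, commutes with l_1 and with every ad_x, x = x_1...x_k in
   S^k(E), k >= 1 (ad_x y = l_{k+1}(x_1,...,x_k,y)); by linearity it is enough
   to consider monomials. *)
Definition centroid (K : fieldType) (V : lmodType K) (E : int -> {pred V})
    (l : brackets V) (F : V -> V) : Prop :=
  deg0_linear E F /\
  (forall x : 'I_1 -> V, l 1%N (fun j => F (x j)) = F (l 1%N x)) /\
  (forall k (x : 'I_k.+2 -> V),
     l k.+2 (fun j => if j == ord_max then F (x j) else x j) = F (l k.+2 x)).

Definition strict_embedding_tensor (K : fieldType) (V : lmodType K)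
    (E : int -> {pred V}) (l : brackets V) (T : V -> V) : Prop :=
  deg0_linear E T /\
  (forall x : 'I_1 -> V, l 1%N (fun j => T (x j)) = T (l 1%N x)) /\
  (forall k (x : 'I_k.+2 -> V),
     l k.+2 (fun j => T (x j)) =
     T (l k.+2 (fun j => if j == ord_max then x j else T (x j)))).

From HB Require Import structures.
From mathcomp Require Import all_boot all_order all_algebra all_fingroup.
From Stdlib Require Import FunctionalExtensionality.

(* The centroid identity for the arguments
   (F x_0, ..., F x_k, x_{k+1}) is the embedding-tensor identity.  Conversely,
   if T has a right inverse G, every argument x_j but the last is T (G x_j), and
   the embedding-tensor identity for (G x_0, ..., G x_k, x_{k+1}) is the
   centroid identity; bijectivity in (iii) provides such a G for both maps. *)

Section Centroid.

Variables (K : fieldType) (V : lmodType K) (E : int -> {pred V}) (l : brackets V).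

Lemma deg0_linear_id : deg0_linear E id.
Proof. by []. Qed.

Lemma deg0_linear_comp F G :
  deg0_linear E F -> deg0_linear E G -> deg0_linear E (F \o G).
Proof.
move=> [linF homF] [linG homG]; split=> [a u v | i x /homG /homF //].
by rewrite /= linG linF.
Qed.

Lemma centroid_id : centroid E l id.
Proof.
split; first exact: deg0_linear_id.
split=> // k x; congr (l _ _); apply: functional_extensionality => j.
by rewrite if_same.
Qed.

Lemma centroid_comp F G :
  centroid E l F -> centroid E l G -> centroid E l (F \o G).
Proof.
move=> [linF [F1 F2]] [linG [G1 G2]].
split; first exact: deg0_linear_comp.
split=> [x | k x] /=; first by rewrite (F1 (G \o x)) G1.
rewrite -G2 -F2; congr (l _ _); apply: functional_extensionality => j.
by case: (j == ord_max).
Qed.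

Lemma centroid_strict_embedding_tensor F :
  centroid E l F -> strict_embedding_tensor E l F.
Proof.
move=> [linF [F1 F2]]; split=> //; split=> // k x.
rewrite -F2; congr (l _ _); apply: functional_extensionality => j.
by case: (j == ord_max).
Qed.

Lemma strict_embedding_tensor_centroid T G :
  strict_embedding_tensor E l T -> cancel G T -> centroid E l T.
Proof.
move=> [linT [T1 T2]] GK; split=> //; split=> // k x.
pose y j := if j == ord_max then x j else G (x j).
have -> : (fun j => if j == ord_max then T (x j) else x j) = T \o y.
  by apply: functional_extensionality => j; rewrite /y /=; case: (j == ord_max).
rewrite T2; congr (T (l _ _)); apply: functional_extensionality => j.
by rewrite /y; case: (j == ord_max).
Qed.

Lemma surjective_strict_embedding_tensor_centroid T :
  strict_embedding_tensor E l T -> (forall y, exists x, T x = y) ->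
  centroid E l T.
Proof.
move=> sT surjT.
have preT y : exists x, T x == y by have [x <-] := surjT y; exists x.
have invT : cancel (fun y => xchoose (preT y)) T.
  by move=> y; apply/eqP; exact: xchooseP (preT y).
exact: strict_embedding_tensor_centroid sT invT.
Qed.

End Centroid.

Theorem corollary3p18 (K : fieldType) (V : lmodType K) (E : int -> {pred V})
    (l : brackets V) :
  lie_infty E l ->
  (* (i) *)
  ((forall F G, centroid E l F -> centroid E l G -> centroid E l (F \o G)) /\
   centroid E l id /\
   (forall F, centroid E l F -> strict_embedding_tensor E l F)) /\
  (* (ii) *)
  (forall T, strict_embedding_tensor E l T ->
     (forall y, exists x, T x = y) -> centroid E l T) /\
  (* (iii) *)
  (forall F,
     (centroid E l F /\
        exists G, centroid E l G /\ cancel F G /\ cancel G F) <->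
     (strict_embedding_tensor E l F /\
        exists G, strict_embedding_tensor E l G /\ cancel F G /\ cancel G F)).
Proof.
move=> _; split; [split; [|split] | split].
- exact: centroid_comp.
- exact: centroid_id.
- exact: centroid_strict_embedding_tensor.
- exact: surjective_strict_embedding_tensor_centroid.
move=> F; split=> [[cF [G [cG [FK GK]]]] | [sF [G [sG [FK GK]]]]].
- split; first exact: centroid_strict_embedding_tensor.
  by exists G; split=> //; exact: centroid_strict_embedding_tensor.
- split; first exact: strict_embedding_tensor_centroid GK.
  by exists G; split=> //; exact: strict_embedding_tensor_centroid FK.
Qed.
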